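(* Let $A\| B$ be a right D2 extension, and let $\beta:\mathcal E\otimes_{\rho(A)}\mathcal E\to S\otimes_R\mathcal E$, $\beta(f\otimes g)=f_{(-1)}\otimes f_{(0)}\circ g$, be the Galois map of the left $S$-comodule algebra $\mathcal E$ (coaction $\varrho(f)=\sum_j\gamma_j\otimes_Ru_j^1f(u_j^2-)$). Then $\beta$ restricts to a bijection $(\mathcal E\otimes_{\rho(A)}\mathcal E)^{\rho(A)}\to S$, $U^1\otimes U^2\mapsto\big(x\mapsto U^1(xU^2(1))\big)$, which is an algebra isomorphism when $(\mathcal E\otimes_{\rho(A)}\mathcal E)^{\rho(A)}$ is given the multiplication $U\cdot V=U^1\circ V^1\otimes V^2\circ U^2$ (the opposite of the multiplication $T(\mathcal E\| \rho(A))$ carries); moreover it commutes with source, target, counit and comultiplication maps, so it is an isomorphism of left bialgebroids $T(\mathcal E\| \rho(A))^{\mathrm{op}}\cong S$ (the base $\mathcal E^{\rho(A)}=\mathrm{End}({}_BA_A)$ being identified with $R$ via $f\mapsto f(1)$).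
   Context: Algebras over a commutative ring $K$; $A\| B$ is a unit-preserving homomorphism $B\to A$; $R=A^B$; $S=\mathrm{End}({}_BA_B)$, $\mathcal E=\mathrm{End}({}_BA)$ (composition); $T(C\| D)=(C\otimes_DC)^D$ for an extension $C\| D$, with Sweedler notation $t=t^1\otimes t^2$ and multiplication $tt'={t'}^1t^1\otimes t^2{t'}^2$; $\rho(a)(x)=xa$, $\lambda(a)(x)=ax$. $A\| B$ is right D2 if $A\otimes_BA$ is isomorphic as $A$-$B$-bimodule to a direct summand of some $A^n$, equivalently there are finitely many $\gamma_j\in S,u_j\in T(A\| B)$ with $a\otimes_Ba'=\sum_ja\gamma_j(a')u_j^1\otimes u_j^2$. $S$ is a left $R$-bialgebroid (source $\lambda|_R$, target $\rho|_R$, counit $\alpha\mapsto\alpha(1)$, comultiplication $\Delta(\alpha)=\sum_j\gamma_j\otimes_Ru_j^1\alpha(u_j^2-)$); $T(C\| D)$ is a right bialgebroid over the centralizer $C^D$ (source $r\mapsto1\otimes r$, target $r\mapsto r\otimes1$, counit $t\mapsto t^1t^2$), and $T(C\| D)^{\mathrm{op}}$ with source and target exchanged is a left bialgebroid. *)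

From mathcomp Require Import all_boot all_algebra.
Set Implicit Arguments. Unset Strict Implicit. Unset Printing Implicit Defensive.
Import GRing.Theory.
Local Open Scope ring_scope.

(* An element of M (x)_R N is represented by a finite formal sum             *)
(* s = [:: (m1,n1); ...; (mk,nk)] meaning  sum_i m_i (x) n_i.                *)
(* [tens_eq] is the congruence of the free commutative monoid on pairs       *)
(* generated by bi-additivity, zero and R-balancing; the quotient is          *)
(* (isomorphic to) the usual tensor product M (x)_R N.  The modules are given *)
(* as subsets (predicates PM, PN) of ambient types, and R-scalars as a subset *)
(* PR; only elements of these subsets enter the generating relations.         *)
Definition all_prop (T : Type) (P : T -> Prop) (s : seq T) : Prop :=
  foldr (fun x acc => P x /\ acc) True s.

Section Tensor.
Variables (M N R : Type) (PM : M -> Prop) (PN : N -> Prop) (PR : R -> Prop).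
Variables (addM : M -> M -> M) (addN : N -> N -> N) (zM : M) (zN : N).
Variables (actM : M -> R -> M) (actN : R -> N -> N).

Inductive tens_gen : seq (M * N) -> seq (M * N) -> Prop :=
| tg_addl m m' n : PM m -> PM m' -> PN n ->
    tens_gen [:: (addM m m', n)] [:: (m, n); (m', n)]
| tg_addr m n n' : PM m -> PN n -> PN n' ->
    tens_gen [:: (m, addN n n')] [:: (m, n); (m, n')]
| tg_zl n : PN n -> tens_gen [:: (zM, n)] [::]
| tg_zr m : PM m -> tens_gen [:: (m, zN)] [::]
| tg_bal m r n : PM m -> PR r -> PN n ->
    tens_gen [:: (actM m r, n)] [:: (m, actN r n)].

Inductive tens_eq : seq (M * N) -> seq (M * N) -> Prop :=
| te_gen s t : tens_gen s t -> tens_eq s t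
| te_refl s : tens_eq s s
| te_sym s t : tens_eq s t -> tens_eq t s
| te_trans s t u : tens_eq s t -> tens_eq t u -> tens_eq s u
| te_cat s s' t t' : tens_eq s s' -> tens_eq t t' -> tens_eq (s ++ t) (s' ++ t')
| te_comm s t : tens_eq (s ++ t) (t ++ s).
End Tensor.

Section Tensor3.
Variables (M R : Type) (PM : M -> Prop) (PR : R -> Prop).
Variables (addM : M -> M -> M) (zM : M).
Variables (actr : M -> R -> M) (actl : R -> M -> M).

Inductive tens3_gen : seq (M * M * M) -> seq (M * M * M) -> Prop :=
| t3_add1 m m' n p : PM m -> PM m' -> PM n -> PM p ->
    tens3_gen [:: (addM m m', n, p)] [:: (m, n, p); (m', n, p)]
| t3_add2 m n n' p : PM m -> PM n -> PM n' -> PM p ->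
    tens3_gen [:: (m, addM n n', p)] [:: (m, n, p); (m, n', p)]
| t3_add3 m n p p' : PM m -> PM n -> PM p -> PM p' ->
    tens3_gen [:: (m, n, addM p p')] [:: (m, n, p); (m, n, p')]
| t3_z1 n p : PM n -> PM p -> tens3_gen [:: (zM, n, p)] [::]
| t3_z2 m p : PM m -> PM p -> tens3_gen [:: (m, zM, p)] [::]
| t3_z3 m n : PM m -> PM n -> tens3_gen [:: (m, n, zM)] [::]
| t3_bal1 m r n p : PM m -> PR r -> PM n -> PM p ->
    tens3_gen [:: (actr m r, n, p)] [:: (m, actl r n, p)]
| t3_bal2 m n r p : PM m -> PM n -> PR r -> PM p ->
    tens3_gen [:: (m, actr n r, p)] [:: (m, n, actl r p)].

Inductive tens3_eq : seq (M * M * M) -> seq (M * M * M) -> Prop :=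
| t3e_gen s t : tens3_gen s t -> tens3_eq s t
| t3e_refl s : tens3_eq s s
| t3e_sym s t : tens3_eq s t -> tens3_eq t s
| t3e_trans s t u : tens3_eq s t -> tens3_eq t u -> tens3_eq s u
| t3e_cat s s' t t' :
    tens3_eq s s' -> tens3_eq t t' -> tens3_eq (s ++ t) (s' ++ t')
| t3e_comm s t : tens3_eq (s ++ t) (t ++ s).
End Tensor3.

(* The extension A | B given by a unit-preserving ring map i : B -> A.       *)
Section Extension.
Variables (A B : pzRingType) (i : B -> A).

Definition is_add (f : A -> A) := forall x y, f (x + y) = f x + f y.
Definition isE (f : A -> A) := is_add f /\ forall b x, f (i b * x) = i b * f x.
Definition isS (f : A -> A) := isE f /\ forall b x, f (x * i b) = f x * i b.
Definition inR (r : A) := forall b, i b * r = r * i b.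

Definition rho (a : A) : A -> A := fun x => x * a.
Definition lam (a : A) : A -> A := fun x => a * x.
Definition fadd (f g : A -> A) : A -> A := fun x => f x + g x.
Definition fzero : A -> A := fun _ => 0.

Definition teqAB : seq (A * A) -> seq (A * A) -> Prop :=
  tens_eq (fun _ : A => True) (fun _ : A => True) (fun _ : B => True)
    +%R +%R 0 0 (fun a b => a * i b) (fun b a => i b * a).
Definition inT_AB (u : seq (A * A)) :=
  forall b, teqAB [seq (i b * p.1, p.2) | p <- u] [seq (p.1, p.2 * i b) | p <- u].

Definition right_D2_quasibase (qb : seq ((A -> A) * seq (A * A))) :=
  all_prop (fun q => isS q.1 /\ inT_AB q.2) qb /\
  forall a a', teqAB [:: (a, a')]
    (flatten [seq [seq (a * q.1 a' * p.1, p.2) | p <- q.2] | q <- qb]).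

Definition teqEE : seq ((A -> A) * (A -> A)) -> seq ((A -> A) * (A -> A)) -> Prop :=
  tens_eq isE isE (fun _ : A => True) fadd fadd fzero fzero
    (fun f a => f \o rho a) (fun a g => rho a \o g).
Definition EE_elt (U : seq ((A -> A) * (A -> A))) :=
  all_prop (fun p => isE p.1 /\ isE p.2) U.
Definition EE_inv (U : seq ((A -> A) * (A -> A))) :=
  EE_elt U /\ forall a,
    teqEE [seq (rho a \o p.1, p.2) | p <- U] [seq (p.1, p.2 \o rho a) | p <- U].
Definition EE_mul (U V : seq ((A -> A) * (A -> A))) :=
  [seq (p.1 \o q.1, q.2 \o p.2) | p <- U, q <- V].
Definition Phi (U : seq ((A -> A) * (A -> A))) : A -> A :=
  fun x => \sum_(p <- U) p.1 (x * p.2 1).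

Definition inEbase (f : A -> A) := isE f /\ forall a, f \o rho a = rho a \o f.

(* S (x)_R S and S (x)_R E: right R-action on S is al.r = rho r o al (target),
   left R-action is r.al = lam r o al (source) *)
Definition teqSS : seq ((A -> A) * (A -> A)) -> seq ((A -> A) * (A -> A)) -> Prop :=
  tens_eq isS isS inR fadd fadd fzero fzero
    (fun al r => rho r \o al) (fun r al => lam r \o al).
Definition teqSE : seq ((A -> A) * (A -> A)) -> seq ((A -> A) * (A -> A)) -> Prop :=
  tens_eq isS isE inR fadd fadd fzero fzero
    (fun al r => rho r \o al) (fun r al => lam r \o al).

Definition coactS (qb : seq ((A -> A) * seq (A * A))) (f : A -> A) :=
  [seq (q.1, fun x => \sum_(p <- q.2) p.1 * f (p.2 * x)) | q <- qb].
Definition DeltaS := coactS.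
Definition galois_map (qb : seq ((A -> A) * seq (A * A)))
    (U : seq ((A -> A) * (A -> A))) :=
  flatten [seq [seq (q.1, q.2 \o fg.2) | q <- coactS qb fg.1] | fg <- U].

Definition teqEEE : seq ((A -> A) * (A -> A) * (A -> A)) ->
    seq ((A -> A) * (A -> A) * (A -> A)) -> Prop :=
  tens3_eq isE (fun _ : A => True) fadd fzero
    (fun f a => f \o rho a) (fun a g => rho a \o g).
Definition TT_to_EEE (W : seq (seq ((A -> A) * (A -> A)) * seq ((A -> A) * (A -> A)))) :=
  flatten [seq [seq (p.1, p.2 \o q.1, q.2) | p <- w.1, q <- w.2] | w <- W].

End Extension.

From mathcomp Require Import all_boot all_algebra.
From Stdlib Require Import FunctionalExtensionality.
From Stdlib Require List.
Set Implicit Arguments. Unset Strict Implicit. Unset Printing Implicit Defensive.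
Import GRing.Theory.
Local Open Scope ring_scope.

(* The quasibase gives the dual-basis expansion
   a (x) a' = sum_j a gamma_j(a') u_j^1 (x) u_j^2 for every balanced biadditive map on
   A x A.  Used inside E (x)_{rho(A)} E (and inside E^{(x)3} and S (x)_R S) it rewrites
   every tensor U into a normal form whose coefficients only depend on the form
   (x, y) |-> sum U^1(x U^2(y)), so two tensors are equal as soon as their forms agree.
   For an invariant U this form is (x, y) |-> Phi(U)(x) y; this gives injectivity of Phi,
   its inverse al |-> sum_j al(- u_j^1) u_j^2 (x) gamma_j, and reduces the compatibility
   with the Galois map, the product and the comultiplication to identities between
   forms. *)

Definition sum_congruence (X : Type) (teq : seq X -> seq X -> Prop) :=
  [/\ forall s, teq s s,
      forall s t, teq s t -> teq t s,
      forall s t u, teq s t -> teq t u -> teq s u,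
      forall s s' t t', teq s s' -> teq t t' -> teq (s ++ t) (s' ++ t')
    & forall s t, teq (s ++ t) (t ++ s)].

Section SumCongruence.
Variables (X : Type) (teq : seq X -> seq X -> Prop).
Hypothesis teqC : sum_congruence teq.

Lemma scong_refl s : teq s s. Proof. by case: teqC => refl *; apply: refl. Qed.
Lemma scong_sym s t : teq s t -> teq t s. Proof. by case: teqC => _ sym *; apply: sym. Qed.
Lemma scong_trans s t u : teq s t -> teq t u -> teq s u.
Proof. by case: teqC => _ _ trans _ _ st tu; apply: trans st tu. Qed.
Lemma scong_cat s s' t t' : teq s s' -> teq t t' -> teq (s ++ t) (s' ++ t').
Proof. by case: teqC => _ _ _ cat _ ss' tt'; apply: cat ss' tt'. Qed.
Lemma scong_catC s t : teq (s ++ t) (t ++ s).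
Proof. by case: teqC => _ _ _ _ catC; apply: catC. Qed.

Lemma scong_cons x y s t : teq [:: x] [:: y] -> teq s t -> teq (x :: s) (y :: t).
Proof. exact: scong_cat. Qed.

Lemma scong_flatten (T : Type) (F G : T -> seq X) (s : seq T) :
  (forall x, List.In x s -> teq (F x) (G x)) ->
  teq (flatten (map F s)) (flatten (map G s)).
Proof.
elim: s => [|x s IH] FG /=; first exact: scong_refl.
by apply: scong_cat; [apply: FG; left | apply: IH => y y_s; apply: FG; right].
Qed.

Lemma scong_map (T : Type) (f g : T -> X) (s : seq T) :
  (forall x, List.In x s -> teq [:: f x] [:: g x]) -> teq (map f s) (map g s).
Proof.
elim: s => [|x s IH] fg /=; first exact: scong_refl.
by apply: scong_cons; [apply: fg; left | apply: IH => y y_s; apply: fg; right].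
Qed.

Lemma scong_nil (T : Type) (f : T -> X) (s : seq T) :
  (forall x, List.In x s -> teq [:: f x] [::]) -> teq (map f s) [::].
Proof.
elim: s => [|x s IH] f0 /=; first exact: scong_refl.
have fx : teq [:: f x] [::] by apply: f0; left.
exact: scong_cat fx (IH (fun y y_s => f0 y (or_intror y_s))).
Qed.

Lemma scong_unzip (T : Type) (h f g : T -> X) (s : seq T) :
  (forall x, List.In x s -> teq [:: h x] [:: f x; g x]) ->
  teq (map h s) (map f s ++ map g s).
Proof.
elim: s => [|x s IH] hfg /=; first exact: scong_refl.
have hx : teq [:: h x] [:: f x; g x] by apply: hfg; left.
have hs := IH (fun y y_s => hfg y (or_intror y_s)).
apply: scong_trans (scong_cat hx hs) _; apply: scong_cons; first exact: scong_refl.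
have -> : g x :: (map f s ++ map g s) = ([:: g x] ++ map f s) ++ map g s by [].
have -> : map f s ++ g x :: map g s = (map f s ++ [:: g x]) ++ map g s by rewrite -catA.
exact: scong_cat (scong_catC _ _) (scong_refl _).
Qed.

Section SlotSum.
Variables (Y K : Type) (pair : Y -> K -> X) (plus : Y -> Y -> Y) (zero : Y).
Variables (P : Y -> Prop) (Q : K -> Prop).
Hypothesis pair_plus : forall a b k, P a -> P b -> Q k ->
  teq [:: pair (plus a b) k] [:: pair a k; pair b k].
Hypothesis pair_zero : forall k, Q k -> teq [:: pair zero k] [::].
Hypothesis P_plus : forall a b, P a -> P b -> P (plus a b).
Hypothesis P_zero : P zero.

Lemma P_foldr (s : seq Y) : (forall a, List.In a s -> P a) -> P (foldr plus zero s).
Proof.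
elim: s => [|a s IH] Ps //=; apply: P_plus; first by apply: Ps; left.
by apply: IH => b b_s; apply: Ps; right.
Qed.

Lemma scong_fold (T : Type) (F : T -> Y) (k : K) (s : seq T) :
  Q k -> (forall x, List.In x s -> P (F x)) ->
  teq (map (fun x => pair (F x) k) s) [:: pair (foldr plus zero (map F s)) k].
Proof.
move=> Qk; elim: s => [|x s IH] PF /=; first by apply: scong_sym; apply: pair_zero.
have PFs y : List.In y s -> P (F y) by move=> y_s; apply: PF; right.
apply: scong_trans (scong_cons (scong_refl [:: pair (F x) k]) (IH PFs)) _.
apply: scong_sym; apply: pair_plus => //; first by apply: PF; left.
by apply: P_foldr => a /List.in_map_iff [y [<- y_s]]; apply: PFs.
Qed.

Lemma scong_collect (T : Type) (F : T -> K -> Y) (s : seq T) (ks : seq K) :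
  (forall k, List.In k ks -> Q k) ->
  (forall x k, List.In x s -> List.In k ks -> P (F x k)) ->
  teq (flatten [seq [seq pair (F x k) k | k <- ks] | x <- s])
      [seq pair (foldr plus zero [seq F x k | x <- s]) k | k <- ks].
Proof.
move=> Qks; elim: s => [|x s IH] PF /=.
  by apply: scong_sym; apply: scong_nil => k k_ks; apply: pair_zero; apply: Qks.
have PFs y k : List.In y s -> List.In k ks -> P (F y k).
  by move=> y_s k_ks; apply: PF => //; right.
apply: scong_trans (scong_cat (scong_refl _) (IH PFs)) _.
apply: scong_sym; apply: scong_unzip => k k_ks; apply: pair_plus; last exact: Qks.
- by apply: PF => //; left.
- by apply: P_foldr => a /List.in_map_iff [y [<- y_s]]; apply: PFs.
Qed.

End SlotSum.
End SumCongruence.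

Lemma tens_eq_congruence M N R PM PN PR addM addN zM zN actM actN :
  sum_congruence (@tens_eq M N R PM PN PR addM addN zM zN actM actN).
Proof. by split; [exact: te_refl | exact: te_sym | exact: te_trans | exact: te_cat |
  exact: te_comm]. Qed.

Lemma tens3_eq_congruence M R PM PR addM zM actr actl :
  sum_congruence (@tens3_eq M R PM PR addM zM actr actl).
Proof. by split; [exact: t3e_refl | exact: t3e_sym | exact: t3e_trans | exact: t3e_cat |
  exact: t3e_comm]. Qed.

Lemma tens_eq_big M N R PM PN PR addM addN zM zN actM actN (Z : zmodType)
    (phi : M * N -> Z) :
  (forall m m' n, PM m -> PM m' -> PN n -> phi (addM m m', n) = phi (m, n) + phi (m', n)) ->
  (forall m n n', PM m -> PN n -> PN n' -> phi (m, addN n n') = phi (m, n) + phi (m, n')) ->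
  (forall n, PN n -> phi (zM, n) = 0) ->
  (forall m, PM m -> phi (m, zN) = 0) ->
  (forall m r n, PM m -> PR r -> PN n -> phi (actM m r, n) = phi (m, actN r n)) ->
  forall s t, @tens_eq M N R PM PN PR addM addN zM zN actM actN s t ->
  \sum_(p <- s) phi p = \sum_(p <- t) phi p.
Proof.
move=> addl addr zl zr bal s t; elim=> {s t}.
- by move=> s t [] *; rewrite ?big_cons ?big_nil ?addr0; auto.
- by [].
- by move=> s t _ ->.
- by move=> s t u _ -> _ ->.
- by move=> s s' t t' _ Es _ Et; rewrite !big_cat Es Et.
- by move=> s t; rewrite big_cat [in RHS]big_cat; apply: addrC.
Qed.

Lemma tens3_eq_big M R PM PR addM zM actr actl (Z : zmodType) (phi : M * M * M -> Z) :
  (forall m m' n p, PM m -> PM m' -> PM n -> PM p ->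
     phi (addM m m', n, p) = phi (m, n, p) + phi (m', n, p)) ->
  (forall m n n' p, PM m -> PM n -> PM n' -> PM p ->
     phi (m, addM n n', p) = phi (m, n, p) + phi (m, n', p)) ->
  (forall m n p p', PM m -> PM n -> PM p -> PM p' ->
     phi (m, n, addM p p') = phi (m, n, p) + phi (m, n, p')) ->
  (forall n p, PM n -> PM p -> phi (zM, n, p) = 0) ->
  (forall m p, PM m -> PM p -> phi (m, zM, p) = 0) ->
  (forall m n, PM m -> PM n -> phi (m, n, zM) = 0) ->
  (forall m r n p, PM m -> PR r -> PM n -> PM p ->
     phi (actr m r, n, p) = phi (m, actl r n, p)) ->
  (forall m n r p, PM m -> PM n -> PR r -> PM p ->
     phi (m, actr n r, p) = phi (m, n, actl r p)) ->
  forall s t, @tens3_eq M R PM PR addM zM actr actl s t ->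
  \sum_(p <- s) phi p = \sum_(p <- t) phi p.
Proof.
move=> add1 add2 add3 z1 z2 z3 bal1 bal2 s t; elim=> {s t}.
- by move=> s t [] *; rewrite ?big_cons ?big_nil ?addr0; auto.
- by [].
- by move=> s t _ ->.
- by move=> s t u _ -> _ ->.
- by move=> s s' t t' _ Es _ Et; rewrite !big_cat Es Et.
- by move=> s t; rewrite big_cat [in RHS]big_cat; apply: addrC.
Qed.

Lemma all_propP (T : Type) (P : T -> Prop) s :
  all_prop P s <-> forall x, List.In x s -> P x.
Proof.
elim: s => [|x s IH] /=; first by split.
split; first by case=> Px /IH Ps y [<-|y_s] //; apply: Ps.
by move=> Ps; split; [apply: Ps; left | apply/IH => y y_s; apply: Ps; right].
Qed.

Lemma In_flatten_map (T U : Type) (F : T -> seq U) s x :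
  List.In x (flatten (map F s)) -> exists y, List.In y s /\ List.In x (F y).
Proof.
elim: s => [|y s IH] //= /List.in_app_iff [x_Fy|x_s]; first by exists y; split; [left|].
by case: (IH x_s) => z [z_s x_Fz]; exists z; split; [right|].
Qed.

Lemma eq_big_In (Z : zmodType) (T : Type) (s : seq T) (F G : T -> Z) :
  (forall x, List.In x s -> F x = G x) -> \sum_(x <- s) F x = \sum_(x <- s) G x.
Proof.
elim: s => [|x s IH] FG; first by rewrite !big_nil.
by rewrite !big_cons (FG x (or_introl erefl)) IH // => y y_s; apply: FG; right.
Qed.

Section Functions.
Variable A : pzRingType.

Lemma is_add0 (f : A -> A) : is_add f -> f 0 = 0.
Proof. by move=> f_add; apply: (@addrI _ (f 0)); rewrite -f_add !addr0. Qed.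

Lemma is_add_sum (T : Type) (f : A -> A) (s : seq T) (F : T -> A) : is_add f ->
  f (\sum_(x <- s) F x) = \sum_(x <- s) f (F x).
Proof.
move=> f_add; elim: s => [|x s IH]; first by rewrite !big_nil is_add0.
by rewrite !big_cons f_add IH.
Qed.

Definition fsum (fs : seq (A -> A)) := foldr (@fadd A) (@fzero A) fs.

Lemma fsumE fs x : fsum fs x = \sum_(f <- fs) f x.
Proof. by elim: fs => [|f fs IH]; rewrite ?big_nil // big_cons -IH. Qed.

Definition ee_form (U : seq ((A -> A) * (A -> A))) x y := \sum_(p <- U) p.1 (x * p.2 y).

Lemma Phi_form U x : Phi U x = ee_form U x 1. Proof. by []. Qed.

End Functions.

Section EndomorphismClasses.
Variables (A B : pzRingType) (i : B -> A).

Lemma isE_fadd f g : isE i f -> isE i g -> isE i (fadd f g).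
Proof.
move=> [f_add fB] [g_add gB]; split; first by move=> x y; rewrite /fadd f_add g_add addrACA.
by move=> b x; rewrite /fadd fB gB mulrDr.
Qed.

Lemma isE_fzero : isE i (@fzero A).
Proof. by split=> [x y|b x]; rewrite /fzero ?addr0 ?mulr0. Qed.

Lemma isE_comp f g : isE i f -> isE i g -> isE i (f \o g).
Proof.
move=> [f_add fB] [g_add gB]; split=> [x y|b x] /=; first by rewrite g_add f_add.
by rewrite gB fB.
Qed.

Lemma isE_id : isE i (idfun : A -> A). Proof. by []. Qed.

Lemma isE_rho a : isE i (rho a).
Proof. by split=> [x y|b x]; rewrite /rho ?mulrDl ?mulrA. Qed.

Lemma isE_rho_comp a f : isE i f -> isE i (rho a \o f).
Proof. exact/isE_comp/isE_rho. Qed.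

Lemma isE_comp_rho a f : isE i f -> isE i (f \o rho a).
Proof. by move=> Ef; apply: isE_comp Ef (isE_rho a). Qed.

Lemma isS_isE f : isS i f -> isE i f. Proof. by case. Qed.

Lemma isS_fadd f g : isS i f -> isS i g -> isS i (fadd f g).
Proof.
move=> [Ef fB] [Eg gB]; split; first exact: isE_fadd.
by move=> b x; rewrite /fadd fB gB mulrDl.
Qed.

Lemma isS_fzero : isS i (@fzero A).
Proof. by split; [exact: isE_fzero | move=> b x; rewrite /fzero mul0r]. Qed.

Lemma isS_rho_comp r f : inR i r -> isS i f -> isS i (rho r \o f).
Proof.
move=> r_R [Ef fB]; split; first exact: isE_rho_comp.
by move=> b x; rewrite /= /rho fB -!mulrA r_R.
Qed.

Lemma isS_lam_comp r f : inR i r -> isS i f -> isS i (lam r \o f).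
Proof.
move=> r_R [[f_add fB] Bf]; split; first split.
- by move=> x y; rewrite /= /lam f_add mulrDr.
- by move=> b x; rewrite /= /lam fB !mulrA r_R.
- by move=> b x; rewrite /= /lam Bf mulrA.
Qed.

Lemma teqEE_congruence : sum_congruence (teqEE i). Proof. exact: tens_eq_congruence. Qed.
Lemma teqSE_congruence : sum_congruence (teqSE i). Proof. exact: tens_eq_congruence. Qed.
Lemma teqSS_congruence : sum_congruence (teqSS i). Proof. exact: tens_eq_congruence. Qed.
Lemma teqEEE_congruence : sum_congruence (teqEEE i). Proof. exact: tens3_eq_congruence. Qed.

Lemma teqAB_big (Z : zmodType) (phi : A -> A -> Z) :
  (forall a a' a'', phi (a + a') a'' = phi a a'' + phi a' a'') ->
  (forall a a' a'', phi a (a' + a'') = phi a a' + phi a a'') ->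
  (forall a, phi 0 a = 0) -> (forall a, phi a 0 = 0) ->
  (forall a b a', phi (a * i b) a' = phi a (i b * a')) ->
  forall s t, teqAB i s t -> \sum_(p <- s) phi p.1 p.2 = \sum_(p <- t) phi p.1 p.2.
Proof.
move=> addl addr zl zr bal s t.
by apply: (tens_eq_big (phi := fun p => phi p.1 p.2)) => /=; auto.
Qed.

Lemma ee_form_teq U V : teqEE i U V -> ee_form U =2 ee_form V.
Proof.
move=> UV x y; apply: (tens_eq_big (phi := fun p => p.1 (x * p.2 y))) UV => /=.
- by [].
- by move=> m n n' [m_add _] _ _; rewrite /fadd mulrDr m_add.
- by [].
- by move=> m [m_add _]; rewrite /fzero mulr0 is_add0.
- by move=> m r n _ _ _; rewrite /rho mulrA.
Qed.

Lemma ee_form_inv U : EE_inv i U -> forall x y, ee_form U x y = Phi U x * y.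
Proof.
move=> [_ U_inv] x y; have := ee_form_teq (U_inv y) x 1.
rewrite /ee_form !big_map /= /rho mulr_suml => ->.
by apply: eq_bigr => p _; rewrite mul1r.
Qed.

End EndomorphismClasses.

Section QuasiBasis.
Variables (A B : pzRingType) (i : B -> A) (qb : seq ((A -> A) * seq (A * A))).
Hypothesis qbD2 : right_D2_quasibase i qb.

Definition qbasis := flatten [seq [seq (p, q.1) | p <- q.2] | q <- qb].

Lemma big_qbasis (Z : zmodType) (F : (A * A) * (A -> A) -> Z) :
  \sum_(k <- qbasis) F k = \sum_(q <- qb) \sum_(p <- q.2) F (p, q.1).
Proof. by rewrite big_flatten big_map; apply: eq_bigr => q _; rewrite big_map. Qed.

Lemma qb_mem q : List.In q qb -> isS i q.1 /\ inT_AB i q.2.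
Proof. by case: qbD2 => /all_propP qb_ok _; apply: qb_ok. Qed.

Lemma qb_isS q : List.In q qb -> isS i q.1.
Proof. by case/qb_mem. Qed.

Lemma qbasis_isE k : List.In k qbasis -> isE i k.2.
Proof.
move=> k_qbasis; have [q [q_qb /List.in_map_iff [p [<- _]]]] := In_flatten_map k_qbasis.
exact/isS_isE/qb_isS.
Qed.

Lemma D2_expand (Z : zmodType) (phi : A -> A -> Z) :
  (forall a a' a'', phi (a + a') a'' = phi a a'' + phi a' a'') ->
  (forall a a' a'', phi a (a' + a'') = phi a a' + phi a a'') ->
  (forall a, phi 0 a = 0) -> (forall a, phi a 0 = 0) ->
  (forall a b a', phi (a * i b) a' = phi a (i b * a')) ->
  forall a a', phi a a' = \sum_(k <- qbasis) phi (a * k.2 a' * k.1.1) k.1.2.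
Proof.
move=> addl addr zl zr bal a a'; case: qbD2 => _ /(_ a a') aa'.
have := teqAB_big addl addr zl zr bal aa'; rewrite big_cons big_nil addr0 /= => ->.
by rewrite big_qbasis big_flatten big_map; apply: eq_bigr => q _; rewrite big_map.
Qed.

Lemma D2_expand_mul (al : A -> A) : is_add al -> (forall b x, al (i b * x) = i b * al x) ->
  forall y a a', a * al (a' * y) = \sum_(k <- qbasis) a * k.2 a' * k.1.1 * al (k.1.2 * y).
Proof.
move=> al_add alB y; apply: (D2_expand (phi := fun a a' => a * al (a' * y))).
- by move=> a a' a''; rewrite mulrDl.
- by move=> a a' a''; rewrite mulrDl al_add mulrDr.
- by move=> a; rewrite mul0r.
- by move=> a; rewrite mul0r is_add0 ?mulr0.
- by move=> a b a'; rewrite -(mulrA (i b)) alB mulrA.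
Qed.

Lemma E_expand g : isE i g -> g = fsum [seq rho (k.1.1 * g k.1.2) \o k.2 | k <- qbasis].
Proof.
move=> [g_add gB]; apply: functional_extensionality => y.
rewrite fsumE big_map -[g y]mul1r -[y]mulr1 (D2_expand_mul g_add gB).
by apply: eq_bigr => k _; rewrite /rho /= mul1r !mulr1 mulrA.
Qed.

Definition qcoef (q : (A -> A) * seq (A * A)) (al : A -> A) := \sum_(p <- q.2) p.1 * al p.2.

Lemma S_expand al : isS i al -> al = fsum [seq rho (qcoef q al) \o q.1 | q <- qb].
Proof.
move=> [[al_add alB] _]; apply: functional_extensionality => x.
rewrite fsumE big_map -[al x]mul1r -[x]mulr1 (D2_expand_mul al_add alB) big_qbasis.
apply: eq_bigr => q _; rewrite /= /rho /qcoef mulr_sumr; apply: eq_bigr => p _.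
by rewrite mul1r !mulr1 !mulrA.
Qed.

End QuasiBasis.

Section TensorEE.
Variables (A B : pzRingType) (i : B -> A) (qb : seq ((A -> A) * seq (A * A))).
Hypothesis qbD2 : right_D2_quasibase i qb.
Notation qbasis := (qbasis qb).
Let EEC := teqEE_congruence i.

Lemma teqEE_expandr f g : isE i f -> isE i g ->
  teqEE i [:: (f, g)] [seq (f \o rho (k.1.1 * g k.1.2), k.2) | k <- qbasis].
Proof.
move=> Ef Eg.
apply: (scong_trans EEC (t := [seq (f, rho (k.1.1 * g k.1.2) \o k.2) | k <- qbasis])).
  rewrite {1}(E_expand qbD2 Eg); apply: (scong_sym EEC).
  apply: (@scong_fold _ _ EEC _ _ (fun a h => (h, a)) (@fadd A) (@fzero A)
     (isE i) (isE i) _ _ _ _ _ (fun k => rho (k.1.1 * g k.1.2) \o k.2) f qbasis) => //.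
  - by move=> *; apply/te_gen/tg_addr.
  - by move=> *; apply/te_gen/tg_zr.
  - exact: isE_fadd.
  - exact: isE_fzero.
  - by move=> k /(qbasis_isE qbD2); apply: isE_rho_comp.
apply: (scong_map EEC) => k /(qbasis_isE qbD2) Ek.
by apply: (scong_sym EEC); apply/te_gen/tg_bal.
Qed.

Lemma teqEE_normal_form U : EE_elt i U ->
  teqEE i U [seq (fun z => ee_form U (z * k.1.1) k.1.2, k.2) | k <- qbasis].
Proof.
move=> /all_propP EU.
apply: (scong_trans EEC (t := flatten [seq [seq (fg.1 \o rho (k.1.1 * fg.2 k.1.2), k.2)
                                      | k <- qbasis] | fg <- U])).
  rewrite -{1}(flatten_seq1 U); apply: (scong_flatten EEC) => -[f g] /EU [Ef Eg].
  exact: teqEE_expandr.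
have collect := @scong_collect _ _ EEC _ _ (fun a k => (a, k.2)) (@fadd A) (@fzero A)
  (isE i) (fun k => isE i k.2) _ _ _ _ _ (fun fg k => fg.1 \o rho (k.1.1 * fg.2 k.1.2))
  U qbasis.
apply: (scong_trans EEC (collect _ _ _ _ _ _)).
- by move=> *; apply/te_gen/tg_addl.
- by move=> *; apply/te_gen/tg_zl.
- exact: isE_fadd.
- exact: isE_fzero.
- exact: qbasis_isE.
- by move=> fg k /EU [Ef _] _; apply: isE_comp_rho.
apply: (scong_map EEC) => k _; rewrite -/(fsum _).
suff -> : fsum [seq fg.1 \o rho (k.1.1 * fg.2 k.1.2) | fg <- U] =
          (fun z => ee_form U (z * k.1.1) k.1.2) by exact: scong_refl.
apply: functional_extensionality => z.
by rewrite fsumE big_map /ee_form; apply: eq_bigr => fg _; rewrite /rho /= mulrA.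
Qed.

Lemma teqEE_form U V : EE_elt i U -> EE_elt i V -> ee_form U =2 ee_form V -> teqEE i U V.
Proof.
move=> EU EV UV; have {}UV : ee_form U = ee_form V.
  by apply: functional_extensionality => x; apply: functional_extensionality.
apply: (scong_trans EEC (teqEE_normal_form EU)); rewrite UV.
by apply: (scong_sym EEC); apply: teqEE_normal_form.
Qed.

Lemma EE_elt_map (F : (A -> A) * (A -> A) -> (A -> A) * (A -> A)) U :
  EE_elt i U -> (forall p, isE i p.1 -> isE i p.2 -> isE i (F p).1 /\ isE i (F p).2) ->
  EE_elt i (map F U).
Proof.
move=> /all_propP EU EF; apply/all_propP => q /List.in_map_iff [p [<- /EU [E1 E2]]].
exact: EF.
Qed.

Lemma EE_inv_form U : EE_elt i U -> (forall x y, ee_form U x y = ee_form U x 1 * y) ->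
  EE_inv i U.
Proof.
move=> EU U_form; split=> // a; apply: teqEE_form.
- by apply: EE_elt_map => // p E1 E2; split=> //; apply: isE_rho_comp.
- by apply: EE_elt_map => // p E1 E2; split=> //; apply: isE_comp_rho.
move=> x y; rewrite /ee_form !big_map /=.
have -> : \sum_(p <- U) rho a (p.1 (x * p.2 y)) = ee_form U x y * a.
  by rewrite /ee_form mulr_suml.
have -> : \sum_(p <- U) p.1 (x * p.2 (rho a y)) = ee_form U x (y * a) by [].
by rewrite U_form [in RHS]U_form mulrA.
Qed.

End TensorEE.

Section PhiAlgebra.
Variables (A B : pzRingType) (i : B -> A) (qb : seq ((A -> A) * seq (A * A))).
Hypothesis qbD2 : right_D2_quasibase i qb.

Lemma Phi_teq U V : teqEE i U V -> Phi U = Phi V.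
Proof. by move=> UV; apply: functional_extensionality => x; rewrite !Phi_form (ee_form_teq UV). Qed.

Lemma Phi_isS U : EE_inv i U -> isS i (Phi U).
Proof.
move=> U_inv; have [/all_propP EU _] := U_inv.
split; first split.
- move=> x y; rewrite /Phi -big_split /=; apply: eq_big_In => p /EU [[p1_add _] _].
  by rewrite mulrDl p1_add.
- move=> b x; rewrite /Phi mulr_sumr; apply: eq_big_In => p /EU [[_ p1B] _].
  by rewrite -p1B mulrA.
- move=> b x; rewrite Phi_form -(ee_form_inv U_inv) /ee_form.
  apply: eq_big_In => p /EU [_ [_ p2B]].
  by rewrite -{2}[i b]mulr1 p2B mulrA.
Qed.

Lemma Phi_inj U V : EE_inv i U -> EE_inv i V -> Phi U = Phi V -> teqEE i U V.
Proof.
move=> U_inv V_inv UV; apply: (teqEE_form qbD2); [by case: U_inv | by case: V_inv |].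
by move=> x y; rewrite (ee_form_inv U_inv) (ee_form_inv V_inv) UV.
Qed.

Definition Psi (al : A -> A) :=
  [seq (fun z => al (z * k.1.1) * k.1.2, k.2) | k <- qbasis qb].

Lemma ee_form_Psi al : isS i al -> forall x y, ee_form (Psi al) x y = al x * y.
Proof.
move=> [[al_add alB] Bal] x y.
rewrite /ee_form /Psi big_map; symmetry.
apply: (D2_expand qbD2 (phi := fun a a' => al a * a')).
- by move=> a a' a''; rewrite al_add mulrDl.
- by move=> a a' a''; rewrite mulrDr.
- by move=> a; rewrite is_add0 ?mul0r.
- by move=> a; rewrite mulr0.
- by move=> a b a'; rewrite Bal mulrA.
Qed.

Lemma Psi_inv al : isS i al -> EE_inv i (Psi al).
Proof.
move=> al_S; apply: (EE_inv_form qbD2); last by move=> x y; rewrite !ee_form_Psi // mulr1.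
apply/all_propP => p /List.in_map_iff [k [<- /(qbasis_isE qbD2) Ek]]; split=> //=.
case: al_S => [[al_add alB] _]; split.
- by move=> x y; rewrite mulrDl al_add mulrDl.
- by move=> b x; rewrite -mulrA alB mulrA.
Qed.

Lemma PsiK al : isS i al -> Phi (Psi al) = al.
Proof.
by move=> al_S; apply: functional_extensionality => x; rewrite Phi_form ee_form_Psi ?mulr1.
Qed.

Lemma Phi_surj al : isS i al -> exists U, EE_inv i U /\ Phi U = al.
Proof. by move=> al_S; exists (Psi al); split; [apply: Psi_inv | apply: PsiK]. Qed.

Lemma ee_form_mul U V : EE_inv i U -> EE_inv i V ->
  forall x y, ee_form (EE_mul U V) x y = Phi U (Phi V x) * y.
Proof.
move=> U_inv V_inv x y; have [/all_propP EU _] := U_inv.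
rewrite -(ee_form_inv U_inv) /ee_form /EE_mul big_flatten big_map.
apply: eq_big_In => p /EU [[p1_add _] _]; rewrite big_map /= -is_add_sum //.
by rewrite -/(ee_form V x (p.2 y)) (ee_form_inv V_inv).
Qed.

Lemma Phi_mul U V : EE_inv i U -> EE_inv i V ->
  EE_inv i (EE_mul U V) /\ Phi (EE_mul U V) = Phi U \o Phi V.
Proof.
move=> U_inv V_inv; split.
  apply: (EE_inv_form qbD2); last by move=> x y; rewrite !ee_form_mul // mulr1.
  case: U_inv => /all_propP EU _; case: V_inv => /all_propP EV _.
  apply/all_propP => w w_UV; have [p [/EU [Ep1 Ep2]]] := In_flatten_map w_UV.
  by move=> /List.in_map_iff [q [<- /EV [Eq1 Eq2]]]; split; apply: isE_comp.
by apply: functional_extensionality => x; rewrite Phi_form ee_form_mul // mulr1.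
Qed.

Lemma Phi1 : Phi [:: (idfun : A -> A, idfun : A -> A)] = idfun.
Proof. by apply: functional_extensionality => x; rewrite /Phi big_seq1 /= mulr1. Qed.

Lemma Ebase_lam f : inEbase i f -> forall x, f x = f 1 * x.
Proof. by move=> [_ f_rho] x; have := congr1 (@^~ 1) (f_rho x); rewrite /= /rho mul1r. Qed.

Lemma Ebase_inR f : inEbase i f -> inR i (f 1) /\ f = lam (f 1).
Proof.
move=> f_base; split; last by apply: functional_extensionality; apply: Ebase_lam.
by move=> b; have [[_ fB] _] := f_base; rewrite -(Ebase_lam f_base) -fB mulr1.
Qed.

Lemma lam_Ebase r : inR i r -> inEbase i (lam r).
Proof.
move=> r_R; split; first split.
- by move=> x y; rewrite /lam mulrDr.
- by move=> b x; rewrite /lam mulrA -r_R mulrA.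
- by move=> a; apply: functional_extensionality => x; rewrite /lam /rho /= mulrA.
Qed.

Lemma Phi_source_target f : inEbase i f ->
  Phi [:: (f, idfun)] = lam (f 1) /\ Phi [:: (idfun, f)] = rho (f 1).
Proof.
move=> f_base; split; apply: functional_extensionality => x; rewrite /Phi big_seq1 //=.
by rewrite mulr1 (Ebase_lam f_base).
Qed.

Lemma Phi_counit (U : seq ((A -> A) * (A -> A))) : Phi U 1 = \sum_(p <- U) (p.1 \o p.2) 1.
Proof. by apply: eq_bigr => p _; rewrite mul1r. Qed.

End PhiAlgebra.

Section GaloisMap.
Variables (A B : pzRingType) (i : B -> A) (qb : seq ((A -> A) * seq (A * A))).
Hypothesis qbD2 : right_D2_quasibase i qb.

Let SEC := teqSE_congruence i.

Lemma inT_AB_mul u f x : inT_AB i u -> is_add f -> (forall b y, f (i b * y) = i b * f y) ->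
  forall b, \sum_(p <- u) i b * p.1 * f (p.2 * x) = \sum_(p <- u) p.1 * f (p.2 * i b * x).
Proof.
move=> u_T f_add fB b; pose phi a a' := a * f (a' * x).
have addl a a' a'' : phi (a + a') a'' = phi a a'' + phi a' a'' by rewrite /phi mulrDl.
have addr a a' a'' : phi a (a' + a'') = phi a a' + phi a a''.
  by rewrite /phi mulrDl f_add mulrDr.
have zl a : phi 0 a = 0 by rewrite /phi mul0r.
have zr a : phi a 0 = 0 by rewrite /phi mul0r is_add0 ?mulr0.
have bal a b' a' : phi (a * i b') a' = phi a (i b' * a').
  by rewrite /phi -(mulrA (i b')) fB mulrA.
by have := teqAB_big addl addr zl zr bal (u_T b); rewrite !big_map.
Qed.

Lemma qcoef_inR q al : List.In q qb -> isS i al -> inR i (qcoef q al).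
Proof.
move=> q_qb [[al_add alB] Bal] b; have [_ q_T] := qb_mem qbD2 q_qb.
rewrite /qcoef mulr_sumr mulr_suml.
transitivity (\sum_(p <- q.2) i b * p.1 * al (p.2 * 1)).
  by apply: eq_bigr => p _; rewrite mulr1 mulrA.
by rewrite inT_AB_mul //; apply: eq_bigr => p _; rewrite mulr1 Bal mulrA.
Qed.

Definition coact_comp (q : (A -> A) * seq (A * A)) (f : A -> A) : A -> A :=
  fun x => \sum_(p <- q.2) p.1 * f (p.2 * x).

Lemma isE_coact q f : List.In q qb -> isE i f -> isE i (coact_comp q f).
Proof.
move=> q_qb [f_add fB]; have [_ q_T] := qb_mem qbD2 q_qb; split.
  by move=> x y; rewrite -big_split; apply: eq_bigr => p _; rewrite mulrDr f_add mulrDr.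
move=> b x; rewrite /coact_comp mulr_sumr.
rewrite [RHS](eq_bigr (fun p => i b * p.1 * f (p.2 * x))) => [|p _]; last by rewrite mulrA.
by rewrite inT_AB_mul //; apply: eq_bigr => p _; rewrite mulrA.
Qed.

Lemma isS_coact q al : List.In q qb -> isS i al -> isS i (coact_comp q al).
Proof.
move=> q_qb al_S; split; first exact/isE_coact/isS_isE.
move=> b x; rewrite /coact_comp mulr_suml; apply: eq_bigr => p _.
by case: al_S => _ Bal; rewrite mulrA Bal mulrA.
Qed.

Lemma galois_mapE U :
  galois_map qb U = flatten [seq [seq (q.1, coact_comp q fg.1 \o fg.2) | q <- qb] | fg <- U].
Proof. by congr flatten; apply: eq_map => fg; rewrite /coactS -map_comp. Qed.

Lemma galois_map_inv U : EE_inv i U -> teqSE i (galois_map qb U) [:: (Phi U, idfun)].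
Proof.
move=> U_inv; have [/all_propP EU _] := U_inv; have PhiU_S := Phi_isS U_inv.
rewrite galois_mapE.
have collect := @scong_collect _ _ SEC _ _ (fun a q => (q.1, a)) (@fadd A) (@fzero A)
  (isE i) (fun q => isS i q.1) _ _ _ _ _ (fun fg q => coact_comp q fg.1 \o fg.2) U qb.
apply: (scong_trans SEC (collect _ _ _ _ _ _)).
- by move=> *; apply/te_gen/tg_addr.
- by move=> *; apply/te_gen/tg_zr.
- exact: isE_fadd.
- exact: isE_fzero.
- exact: (qb_isS qbD2).
- by move=> fg q /EU [Ef Eg] q_qb; apply: isE_comp => //; apply: isE_coact.
apply: (scong_trans SEC (t := [seq (rho (qcoef q (Phi U)) \o q.1, idfun) | q <- qb])).
  apply: (scong_map SEC) => q q_qb; rewrite -/(fsum _).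
  suff -> : fsum [seq coact_comp q fg.1 \o fg.2 | fg <- U] = lam (qcoef q (Phi U)) \o idfun.
    by apply: (scong_sym SEC); apply/te_gen/tg_bal; [apply: (qb_isS qbD2) | apply: qcoef_inR |].
  apply: functional_extensionality => y.
  rewrite fsumE big_map /= /lam /qcoef mulr_suml exchange_big /=.
  apply: eq_bigr => p _; rewrite -mulr_sumr -mulrA -(ee_form_inv U_inv).
  by rewrite /ee_form mulr_sumr.
rewrite {2}(S_expand qbD2 PhiU_S).
apply: (@scong_fold _ _ SEC _ _ (fun a h => (a, h)) (@fadd A) (@fzero A)
  (isS i) (isE i) _ _ _ _ _ (fun q => rho (qcoef q (Phi U)) \o q.1) idfun qb).
- by move=> *; apply/te_gen/tg_addl.
- by move=> *; apply/te_gen/tg_zl.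
- exact: isS_fadd.
- exact: isS_fzero.
- exact: isE_id.
- by move=> q q_qb; apply: isS_rho_comp; [apply: qcoef_inR | apply: (qb_isS qbD2)].
Qed.

End GaloisMap.

Section TensorEEE.
Variables (A B : pzRingType) (i : B -> A) (qb : seq ((A -> A) * seq (A * A))).
Hypothesis qbD2 : right_D2_quasibase i qb.
Notation qbasis := (qbasis qb).

Let EEEC := teqEEE_congruence i.

Definition eee_form (s : seq ((A -> A) * (A -> A) * (A -> A))) x y z :=
  \sum_(t <- s) t.1.1 (x * t.1.2 (y * t.2 z)).

Definition EEE_elt (s : seq ((A -> A) * (A -> A) * (A -> A))) :=
  all_prop (fun t => isE i t.1.1 /\ isE i t.1.2 /\ isE i t.2) s.

Lemma eee_form_teq s t : teqEEE i s t -> forall x y z, eee_form s x y z = eee_form t x y z.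
Proof.
move=> st x y z; apply: (tens3_eq_big (phi := fun t => t.1.1 (x * t.1.2 (y * t.2 z)))) st => /=.
- by [].
- by move=> m n n' p [m_add _] _ _ _; rewrite /fadd mulrDr m_add.
- by move=> m n p p' [m_add _] [n_add _] _ _; rewrite /fadd mulrDr n_add mulrDr m_add.
- by [].
- by move=> m p [m_add _] _; rewrite /fzero mulr0 is_add0.
- by move=> m n [m_add _] [n_add _]; rewrite /fzero mulr0 is_add0 // mulr0 is_add0.
- by move=> m r n p _ _ _ _; rewrite /rho mulrA.
- by move=> m n r p _ _ _ _; rewrite /rho mulrA.
Qed.

Lemma teqEEE_expand3 f g h : isE i f -> isE i g -> isE i h ->
  teqEEE i [:: (f, g, h)] [seq (f, g \o rho (k.1.1 * h k.1.2), k.2) | k <- qbasis].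
Proof.
move=> Ef Eg Eh.
apply: (scong_trans EEEC (t := [seq (f, g, rho (k.1.1 * h k.1.2) \o k.2) | k <- qbasis])).
  rewrite {1}(E_expand qbD2 Eh); apply: (scong_sym EEEC).
  apply: (@scong_fold _ _ EEEC _ _ (fun a fg => (fg.1, fg.2, a)) (@fadd A) (@fzero A)
     (isE i) (fun fg => isE i fg.1 /\ isE i fg.2) _ _ _ _ _
     (fun k => rho (k.1.1 * h k.1.2) \o k.2) (f, g) qbasis) => //.
  - by move=> a b fg Ea Eb [E1 E2]; apply/t3e_gen/t3_add3.
  - by move=> fg [E1 E2]; apply/t3e_gen/t3_z3.
  - exact: isE_fadd.
  - exact: isE_fzero.
  - by move=> k /(qbasis_isE qbD2); apply: isE_rho_comp.
apply: (scong_map EEEC) => k /(qbasis_isE qbD2) Ek.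
by apply: (scong_sym EEEC); apply/t3e_gen/t3_bal2.
Qed.

Lemma teqEEE_expand2 f g h : isE i f -> isE i g -> isE i h ->
  teqEEE i [:: (f, g, h)] [seq (f \o rho (k.1.1 * g k.1.2), k.2, h) | k <- qbasis].
Proof.
move=> Ef Eg Eh.
apply: (scong_trans EEEC (t := [seq (f, rho (k.1.1 * g k.1.2) \o k.2, h) | k <- qbasis])).
  rewrite {1}(E_expand qbD2 Eg); apply: (scong_sym EEEC).
  apply: (@scong_fold _ _ EEEC _ _ (fun a fh => (fh.1, a, fh.2)) (@fadd A) (@fzero A)
     (isE i) (fun fh => isE i fh.1 /\ isE i fh.2) _ _ _ _ _
     (fun k => rho (k.1.1 * g k.1.2) \o k.2) (f, h) qbasis) => //.
  - by move=> a b fh Ea Eb [E1 E2]; apply/t3e_gen/t3_add2.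
  - by move=> fh [E1 E2]; apply/t3e_gen/t3_z2.
  - exact: isE_fadd.
  - exact: isE_fzero.
  - by move=> k /(qbasis_isE qbD2); apply: isE_rho_comp.
apply: (scong_map EEEC) => k /(qbasis_isE qbD2) Ek.
by apply: (scong_sym EEEC); apply/t3e_gen/t3_bal1.
Qed.

Definition qbasis2 := flatten [seq [seq (k, k') | k <- qbasis] | k' <- qbasis].

Lemma qbasis2_map (X : Type) (F : (A * A) * (A -> A) -> (A * A) * (A -> A) -> X) :
  flatten [seq [seq F k k' | k <- qbasis] | k' <- qbasis] = [seq F kk.1 kk.2 | kk <- qbasis2].
Proof.
rewrite /qbasis2 map_flatten -map_comp; congr flatten; apply: eq_map => k' /=.
by rewrite -map_comp.
Qed.

Lemma qbasis2_isE kk : List.In kk qbasis2 -> isE i kk.1.2 /\ isE i kk.2.2.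
Proof.
move=> kk_qb2; have [k' [k'_qb /List.in_map_iff [k [<- k_qb]]]] := In_flatten_map kk_qb2.
by split; apply: (qbasis_isE qbD2).
Qed.

Lemma teqEEE_expand f g h : isE i f -> isE i g -> isE i h ->
  teqEEE i [:: (f, g, h)]
    [seq (f \o rho (kk.1.1.1 * g (kk.1.1.2 * (kk.2.1.1 * h kk.2.1.2))), kk.1.2, kk.2.2)
      | kk <- qbasis2].
Proof.
move=> Ef Eg Eh; apply: (scong_trans EEEC (teqEEE_expand3 Ef Eg Eh)).
rewrite -(qbasis2_map (fun k k' =>
  (f \o rho (k.1.1 * g (k.1.2 * (k'.1.1 * h k'.1.2))), k.2, k'.2))).
rewrite -flatten_map1; apply: (scong_flatten EEEC) => k' /(qbasis_isE qbD2) Ek'.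
exact/teqEEE_expand2/Ek'/isE_comp_rho.
Qed.

Lemma teqEEE_normal_form s : EEE_elt s ->
  teqEEE i s [seq (fun z => eee_form s (z * kk.1.1.1) (kk.1.1.2 * kk.2.1.1) kk.2.1.2,
                   kk.1.2, kk.2.2) | kk <- qbasis2].
Proof.
move=> /all_propP Es.
apply: (scong_trans EEEC (t := flatten [seq [seq
   (t.1.1 \o rho (kk.1.1.1 * t.1.2 (kk.1.1.2 * (kk.2.1.1 * t.2 kk.2.1.2))), kk.1.2, kk.2.2)
      | kk <- qbasis2] | t <- s])).
  rewrite -{1}(flatten_seq1 s); apply: (scong_flatten EEEC) => -[[f g] h] /Es [Ef [Eg Eh]].
  exact: teqEEE_expand.
have collect := @scong_collect _ _ EEEC _ _ (fun a kk => (a, kk.1.2, kk.2.2)) (@fadd A) (@fzero A)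
  (isE i) (fun kk => isE i kk.1.2 /\ isE i kk.2.2) _ _ _ _ _
  (fun t kk => t.1.1 \o rho (kk.1.1.1 * t.1.2 (kk.1.1.2 * (kk.2.1.1 * t.2 kk.2.1.2)))) s qbasis2.
apply: (scong_trans EEEC (collect _ _ _ _ _ _)).
- by move=> a b kk Ea Eb [E1 E2]; apply/t3e_gen/t3_add1.
- by move=> kk [E1 E2]; apply/t3e_gen/t3_z1.
- exact: isE_fadd.
- exact: isE_fzero.
- exact: qbasis2_isE.
- by move=> t kk /Es [Et _] _; apply: isE_comp_rho.
apply: (scong_map EEEC) => kk _; rewrite -/(fsum _).
suff -> : fsum [seq t.1.1 \o rho (kk.1.1.1 * t.1.2 (kk.1.1.2 * (kk.2.1.1 * t.2 kk.2.1.2)))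
                | t <- s] = (fun z => eee_form s (z * kk.1.1.1) (kk.1.1.2 * kk.2.1.1) kk.2.1.2).
  exact: scong_refl.
apply: functional_extensionality => z.
by rewrite fsumE big_map /eee_form; apply: eq_bigr => t _; rewrite /rho /= !mulrA.
Qed.

Lemma teqEEE_form s t : EEE_elt s -> EEE_elt t ->
  (forall x y z, eee_form s x y z = eee_form t x y z) -> teqEEE i s t.
Proof.
move=> Es Et st; have {}st : eee_form s = eee_form t.
  by do 3!apply: functional_extensionality => ?; apply: st.
apply: (scong_trans EEEC (teqEEE_normal_form Es)); rewrite st.
by apply: (scong_sym EEEC); apply: teqEEE_normal_form.
Qed.

End TensorEEE.

Section Comultiplication.
Variables (A B : pzRingType) (i : B -> A) (qb : seq ((A -> A) * seq (A * A))).
Hypothesis qbD2 : right_D2_quasibase i qb.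

Let SSC := teqSS_congruence i.

Definition TT_inv (W : seq (seq ((A -> A) * (A -> A)) * seq ((A -> A) * (A -> A)))) :=
  all_prop (fun w => EE_inv i w.1 /\ EE_inv i w.2) W.

Lemma eee_form_TT W : TT_inv W -> forall x y z,
  eee_form (TT_to_EEE W) x y z = \sum_(w <- W) Phi w.1 x * (Phi w.2 y * z).
Proof.
move=> /all_propP W_inv x y z.
rewrite /eee_form /TT_to_EEE big_flatten big_map; apply: eq_big_In => w /W_inv [w1_inv w2_inv].
have [/all_propP Ew1 _] := w1_inv.
rewrite -(ee_form_inv w1_inv) -(ee_form_inv w2_inv) /ee_form big_flatten big_map.
apply: eq_big_In => p /Ew1 [[p1_add _] [p2_add _]].
by rewrite big_map (is_add_sum _ _ p2_add) mulr_sumr (is_add_sum _ _ p1_add).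
Qed.

Lemma EEE_elt_TT W : TT_inv W -> EEE_elt i (TT_to_EEE W).
Proof.
move=> /all_propP W_inv; apply/all_propP => t t_W.
have [w [/W_inv [[/all_propP Ew1 _] [/all_propP Ew2 _]] t_w]] := In_flatten_map t_W.
have [p [/Ew1 [Ep1 Ep2] /List.in_map_iff [q [<- /Ew2 [Eq1 Eq2]]]]] := In_flatten_map t_w.
by split; [|split]; try apply: isE_comp.
Qed.

Lemma EEE_elt_mid_id U : EE_elt i U -> EEE_elt i [seq (p.1, idfun, p.2) | p <- U].
Proof.
by move=> /all_propP EU; apply/all_propP => t /List.in_map_iff [p [<- /EU [E1 E2]]].
Qed.

Lemma eee_form_mid_id U : EE_inv i U -> forall x y z,
  eee_form [seq (p.1, idfun, p.2) | p <- U] x y z = Phi U (x * y) * z.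
Proof.
move=> U_inv x y z; rewrite -(ee_form_inv U_inv) /eee_form /ee_form big_map.
by apply: eq_bigr => p _; rewrite /= mulrA.
Qed.

Lemma Delta_T_exists U : EE_inv i U ->
  exists W, TT_inv W /\ teqEEE i (TT_to_EEE W) [seq (p.1, idfun, p.2) | p <- U].
Proof.
move=> U_inv; have PhiU_S := Phi_isS U_inv; have [[PhiU_add PhiU_B] _] := PhiU_S.
have W_inv : TT_inv [seq (Psi qb q.1, Psi qb (coact_comp q (Phi U))) | q <- qb].
  apply/all_propP => w /List.in_map_iff [q [<- q_qb]].
  by split; apply: (Psi_inv qbD2); [exact: (qb_isS qbD2) | exact: (isS_coact qbD2)].
exists [seq (Psi qb q.1, Psi qb (coact_comp q (Phi U))) | q <- qb]; split=> //.
apply: (teqEEE_form qbD2 (EEE_elt_TT W_inv)); first by apply: EEE_elt_mid_id; case: U_inv.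
move=> x y z; rewrite (eee_form_TT W_inv) (eee_form_mid_id U_inv) big_map.
rewrite -[Phi U (x * y)]mul1r (D2_expand_mul qbD2 PhiU_add PhiU_B) big_qbasis mulr_suml.
apply: eq_big_In => q q_qb /=.
rewrite (PsiK qbD2 (qb_isS qbD2 q_qb)) (PsiK qbD2 (isS_coact qbD2 q_qb PhiU_S)).
rewrite /coact_comp !mulr_suml mulr_sumr.
by apply: eq_bigr => p _; rewrite mul1r !mulrA.
Qed.

Lemma teqSS_expandl al al' : isS i al -> isS i al' ->
  teqSS i [:: (al, al')] [seq (q.1, lam (qcoef q al) \o al') | q <- qb].
Proof.
move=> al_S al'_S.
apply: (scong_trans SSC (t := [seq (rho (qcoef q al) \o q.1, al') | q <- qb])).
  rewrite {1}(S_expand qbD2 al_S); apply: (scong_sym SSC).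
  apply: (@scong_fold _ _ SSC _ _ (fun a h => (a, h)) (@fadd A) (@fzero A)
     (isS i) (isS i) _ _ _ _ _ (fun q => rho (qcoef q al) \o q.1) al' qb) => //.
  - by move=> *; apply/te_gen/tg_addl.
  - by move=> *; apply/te_gen/tg_zl.
  - exact: isS_fadd.
  - exact: isS_fzero.
  - by move=> q q_qb; apply: isS_rho_comp; [apply: (qcoef_inR qbD2) | apply: (qb_isS qbD2)].
apply: (scong_map SSC) => q q_qb.
by apply/te_gen/tg_bal; [apply: (qb_isS qbD2) | apply: (qcoef_inR qbD2) |].
Qed.

Lemma teqSS_normal_form (W : seq ((A -> A) * (A -> A))) :
  all_prop (fun w => isS i w.1 /\ isS i w.2) W ->
  teqSS i W [seq (q.1, fsum [seq lam (qcoef q w.1) \o w.2 | w <- W]) | q <- qb].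
Proof.
move=> /all_propP SW.
apply: (scong_trans SSC (t := flatten [seq [seq (q.1, lam (qcoef q w.1) \o w.2) | q <- qb]
                                       | w <- W])).
  rewrite -{1}(flatten_seq1 W); apply: (scong_flatten SSC) => -[al al'] /SW [S1 S2].
  exact: teqSS_expandl.
have collect := @scong_collect _ _ SSC _ _ (fun a q => (q.1, a)) (@fadd A) (@fzero A)
  (isS i) (fun q => isS i q.1) _ _ _ _ _ (fun w q => lam (qcoef q w.1) \o w.2) W qb.
apply: collect.
- by move=> *; apply/te_gen/tg_addr.
- by move=> *; apply/te_gen/tg_zr.
- exact: isS_fadd.
- exact: isS_fzero.
- exact: (qb_isS qbD2).
- by move=> w q /SW [S1 S2] q_qb; apply: isS_lam_comp => //; apply: (qcoef_inR qbD2).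
Qed.

Lemma Delta_T_Phi U W : EE_inv i U -> TT_inv W ->
  teqEEE i (TT_to_EEE W) [seq (p.1, idfun, p.2) | p <- U] ->
  teqSS i [seq (Phi w.1, Phi w.2) | w <- W] (DeltaS qb (Phi U)).
Proof.
move=> U_inv W_inv WU.
have PhiW x y : \sum_(w <- W) Phi w.1 x * Phi w.2 y = Phi U (x * y).
  have := eee_form_teq WU x y 1; rewrite (eee_form_TT W_inv) (eee_form_mid_id U_inv) mulr1.
  by move=> <-; apply: eq_bigr => w _; rewrite mulr1.
have SW : all_prop (fun w => isS i w.1 /\ isS i w.2) [seq (Phi w.1, Phi w.2) | w <- W].
  move/all_propP: W_inv => W_inv; apply/all_propP => w' /List.in_map_iff [w [<- /W_inv]].
  by case=> w1_inv w2_inv; split; apply: Phi_isS.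
apply: (scong_trans SSC (teqSS_normal_form SW)).
suff -> : [seq (q.1, fsum [seq lam (qcoef q w.1) \o w.2
                            | w <- [seq (Phi w.1, Phi w.2) | w <- W]]) | q <- qb] =
          DeltaS qb (Phi U) by exact: scong_refl.
apply: eq_map => q; congr pair; apply: functional_extensionality => y.
rewrite fsumE !big_map /lam /qcoef /=; under eq_bigr do rewrite mulr_suml.
rewrite exchange_big /=; apply: eq_bigr => p _.
by rewrite -PhiW mulr_sumr; apply: eq_bigr => w _; rewrite mulrA.
Qed.

End Comultiplication.

Theorem corollary5p4 (A B : pzRingType) (i : {rmorphism B -> A})
    (qb : seq ((A -> A) * seq (A * A))) :
  right_D2_quasibase i qb ->
  (* Phi is well defined on E (x)_{rho(A)} E *)
  (forall U V, EE_elt i U -> EE_elt i V -> teqEE i U V -> Phi U = Phi V) /\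
  (* beta restricted to invariants is U |-> Phi(U) (x) 1 in S (x)_R E *)
  (forall U, EE_inv i U -> teqSE i (galois_map qb U) [:: (Phi U, idfun)]) /\
  (* Phi maps invariants into S, bijectively *)
  (forall U, EE_inv i U -> isS i (Phi U)) /\
  (forall U V, EE_inv i U -> EE_inv i V -> Phi U = Phi V -> teqEE i U V) /\
  (forall al, isS i al -> exists U, EE_inv i U /\ Phi U = al) /\
  (* algebra isomorphism for the product U.V = U^1 o V^1 (x) V^2 o U^2 *)
  (forall U V, EE_inv i U -> EE_inv i V ->
     EE_inv i (EE_mul U V) /\ Phi (EE_mul U V) = Phi U \o Phi V) /\
  Phi [:: (idfun : A -> A, idfun : A -> A)] = idfun /\
  (* base identification E^{rho(A)} = End(_B A_A) ~ R via f |-> f 1 *)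
  (forall f, inEbase i f -> inR i (f 1) /\ f = lam (f 1)) /\
  (forall r, inR i r -> inEbase i (lam r)) /\
  (* source and target *)
  (forall f, inEbase i f ->
     Phi [:: (f, idfun)] = lam (f 1) /\ Phi [:: (idfun, f)] = rho (f 1)) /\
  (* counit: eps_T(U) = U^1 o U^2, eps_S(al) = al 1 *)
  (forall U, EE_inv i U -> Phi U 1 = \sum_(p <- U) (p.1 \o p.2) 1) /\
  (* comultiplication: Delta_T(U) is (the class of) any W in T (x) T whose
     image in E (x) E (x) E is U^1 (x) 1 (x) U^2 *)
  (forall U, EE_inv i U ->
     (exists W, all_prop (fun w => EE_inv i w.1 /\ EE_inv i w.2) W /\
        teqEEE i (TT_to_EEE W) [seq (p.1, idfun, p.2) | p <- U]) /\
     (forall W, all_prop (fun w => EE_inv i w.1 /\ EE_inv i w.2) W ->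
        teqEEE i (TT_to_EEE W) [seq (p.1, idfun, p.2) | p <- U] ->
        teqSS i [seq (Phi w.1, Phi w.2) | w <- W] (DeltaS qb (Phi U)))).
Proof.
move=> qbD2.
split; first by move=> U V _ _; apply: Phi_teq.
split; first exact: (galois_map_inv qbD2).
split; first exact: Phi_isS.
split; first exact: (Phi_inj qbD2).
split; first exact: (Phi_surj qbD2).
split; first exact: (Phi_mul qbD2).
split; first exact: Phi1.
split; first exact: Ebase_inR.
split; first exact: lam_Ebase.
split; first exact: Phi_source_target.
split; first by move=> U _; apply: Phi_counit.
move=> U U_inv; split; first exact: (Delta_T_exists qbD2).
by move=> W; exact: (Delta_T_Phi qbD2 U_inv).
Qed.
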